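(* On $\mathbb{R}^4$ let $H^1,H^2,H^3$ be constant-coefficient 2-forms with $H^i\wedge H^j=2\delta^{ij}\,\mathrm{vol}$ for a nonvanishing constant 4-form $\mathrm{vol}$, let $M>0$ be a constant, let $a^i$ ($i=1,2,3$) be smooth 1-forms and $\Psi_{ij}$ smooth functions, symmetric and tracefree ($\delta^{ij}\Psi_{ij}=0$). Define the Lagrangian 4-form $$L=\Psi_{ij}\left(M^2H^i\wedge da^j+\tfrac12\,da^i\wedge da^j\right).$$ For an arbitrary smooth vector field $\eta$ and arbitrary smooth functions $\xi^i$, consider the infinitesimal transformation $$\delta a^i=d\xi^i+i_\eta\big(M^2H^i+da^i\big),\qquad \delta\Psi_{ij}=i_\eta d\Psi_{ij}.$$ Then the first-order variation $\delta L$ is an exact 4-form; explicitly $\delta L=d\,(i_\eta L)$. In particular the action $\int L$ is invariant up to boundary terms.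
   Context: $i_\eta$ denotes interior product with the vector field $\eta$. *)

From mathcomp Require Import all_boot all_order all_algebra.
From mathcomp Require Import all_classical all_reals all_analysis.
Set Implicit Arguments. Unset Strict Implicit. Unset Printing Implicit Defensive.
Import Order.TTheory GRing.Theory Num.Theory.
Import numFieldNormedType.Exports.
Local Open Scope ring_scope.

(* Differential forms on R^4 in coordinates x^0..x^3.  A (possibly
   inhomogeneous) form is given by its components in the basis
   dx^S = dx^{s_1} /\ ... /\ dx^{s_k}, s_1 < ... < s_k, S = {s_1,...,s_k}. *)

Notation pt R := ('rV[R]_4).
Definition diffform (R : realType) := {set 'I_4} -> pt R -> R.

Definition ecoord (R : realType) (k : 'I_4) : pt R := delta_mx 0 k.

Definition partial (R : realType) (k : 'I_4) (f : pt R -> R) : pt R -> R :=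
  fun x => 'D_(ecoord R k) f x.

Definition iter_partial (R : realType) (s : seq 'I_4) (f : pt R -> R) :=
  foldr (@partial R) f s.

Definition smooth (R : realType) (f : pt R -> R) : Prop :=
  forall (s : seq 'I_4) (x : pt R), differentiable (iter_partial s f) x.

Definition smooth_form (R : realType) (w : diffform R) := forall S : {set 'I_4}, smooth (w S).
Definition is_deg (R : realType) (k : nat) (w : diffform R) :=
  forall S : {set 'I_4}, #|S| != k -> w S = (fun _ => 0).
Definition constant_form (R : realType) (w : diffform R) :=
  forall (S : {set 'I_4}) (x y : pt R), w S x = w S y.

(* sign of the permutation sorting (A,B) *)
Definition ninv (A B : {set 'I_4}) : nat :=
  #|[set p : 'I_4 * 'I_4 | [&& p.1 \in A, p.2 \in B & (p.2 < p.1)%N]]|.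
Definition sgn (R : realType) (A B : {set 'I_4}) : R := (-1) ^+ ninv A B.

(* dx^A /\ dx^B = sgn A B dx^(A u B) for disjoint A, B *)
Definition wedge (R : realType) (a b : diffform R) : diffform R :=
  fun S x => \sum_(A : {set 'I_4} | A \subset S)
               sgn R A (S :\: A) * a A x * b (S :\: A) x.

Definition dform (R : realType) (w : diffform R) : diffform R :=
  fun S x => \sum_(k in S) sgn R (finset.set1 k) (S :\ k) * partial k (w (S :\ k)) x.

(* iprod product with the vector field eta = sum_k eta_k d/dx^k *)
Definition iprod (R : realType) (eta : 'I_4 -> pt R -> R) (w : diffform R)
  : diffform R :=
  fun S x => \sum_(k : 'I_4 | k \notin S) eta k x * sgn R (finset.set1 k) S * w (k |: S) x.

Definition fn0 (R : realType) (f : pt R -> R) : diffform R :=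
  fun S x => if S == finset.set0 then f x else 0.

Definition Lag (R : realType) (M : R) (H : 'I_3 -> diffform R)
  (Psi : 'I_3 -> 'I_3 -> pt R -> R) (a : 'I_3 -> diffform R) : diffform R :=
  fun S x => \sum_(i < 3) \sum_(j < 3)
    Psi i j x * (M ^+ 2 * wedge (H i) (dform (a j)) S x
                 + 2^-1 * wedge (dform (a i)) (dform (a j)) S x).

(* First-order variation of L under a -> a + eps*da', Psi -> Psi + eps*dPsi
   (the term linear in eps). *)
Definition Lag_variation (R : realType) (M : R) (H : 'I_3 -> diffform R)
  (Psi : 'I_3 -> 'I_3 -> pt R -> R) (a : 'I_3 -> diffform R)
  (dPsi : 'I_3 -> 'I_3 -> pt R -> R) (da' : 'I_3 -> diffform R) : diffform R :=
  fun S x => \sum_(i < 3) \sum_(j < 3)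
    (dPsi i j x * (M ^+ 2 * wedge (H i) (dform (a j)) S x
                   + 2^-1 * wedge (dform (a i)) (dform (a j)) S x)
     + Psi i j x * (M ^+ 2 * wedge (H i) (dform (da' j)) S x
                   + 2^-1 * (wedge (dform (da' i)) (dform (a j)) S x
                             + wedge (dform (a i)) (dform (da' j)) S x))).

From mathcomp Require Import all_boot all_order all_algebra.
From mathcomp Require Import all_classical all_reals all_analysis.
From mathcomp Require Import ring.
Set Implicit Arguments. Unset Strict Implicit. Unset Printing Implicit Defensive.
Import Order.TTheory GRing.Theory Num.Theory.
Import numFieldNormedType.Exports.
Local Open Scope ring_scope.

(* Write [F^i := M^2 H^i + da^i].  Tracelessness of [Psi] kills
   [Psi_ij H^i /\ H^j] and its symmetry merges the two cross terms, so
   [L = 1/2 Psi_ij F^i /\ F^j].  As [dF^i = 0], Cartan's formula gives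
   [delta (da^i) = d i_eta F^i = L_eta F^i], while [delta Psi_ij = eta(Psi_ij)];
   by the Leibniz rule [delta L] is therefore the Lie derivative [L_eta L], which
   for a 4-form on R^4 equals [d i_eta L].  Everything is computed in
   coordinates; the analytic input is the symmetry of second partial
   derivatives, behind [d o d = 0]. *)

Notation o0 := (@Ordinal 4 0 isT).
Notation o1 := (@Ordinal 4 1 isT).
Notation o2 := (@Ordinal 4 2 isT).
Notation o3 := (@Ordinal 4 3 isT).

Lemma ord4_ind (P : 'I_4 -> Prop) : P o0 -> P o1 -> P o2 -> P o3 -> forall i, P i.
Proof.
by move=> P0 P1 P2 P3 [[|[|[|[|n]]]] lt_i4] //; rewrite (bool_irrelevance lt_i4 isT).
Qed.

(* Subsets of ['I_4] by their characteristic bits, so that every set operation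
   below is computed by [/=] on explicit bits. *)
Definition set4 (b0 b1 b2 b3 : bool) : {set 'I_4} :=
  [set i : 'I_4 | nth false [:: b0; b1; b2; b3] i].

Lemma set4E (S : {set 'I_4}) : S = set4 (o0 \in S) (o1 \in S) (o2 \in S) (o3 \in S).
Proof. by apply/setP; apply: ord4_ind; rewrite inE. Qed.

Lemma in_set4 b0 b1 b2 b3 (i : 'I_4) :
  (i \in set4 b0 b1 b2 b3) = nth false [:: b0; b1; b2; b3] i.
Proof. by rewrite inE. Qed.

Lemma set4U1 b0 b1 b2 b3 (k : 'I_4) :
  k |: set4 b0 b1 b2 b3 = set4 (b0 || (k == 0 :> nat)) (b1 || (k == 1 :> nat))
                               (b2 || (k == 2 :> nat)) (b3 || (k == 3 :> nat)).
Proof.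
by apply/setP; apply: ord4_ind; rewrite !inE; move: k; apply: ord4_ind;
  rewrite /= ?orbF ?orbT.
Qed.

Lemma set4D1 b0 b1 b2 b3 (k : 'I_4) :
  set4 b0 b1 b2 b3 :\ k = set4 (b0 && (k != 0 :> nat)) (b1 && (k != 1 :> nat))
                               (b2 && (k != 2 :> nat)) (b3 && (k != 3 :> nat)).
Proof.
by apply/setP; apply: ord4_ind; rewrite !inE; move: k; apply: ord4_ind;
  rewrite /= ?andbF ?andbT.
Qed.

Lemma set4_set1 (k : 'I_4) :
  [set k] = set4 (k == 0 :> nat) (k == 1 :> nat) (k == 2 :> nat) (k == 3 :> nat).
Proof. by apply/setP; apply: ord4_ind; rewrite !inE; move: k; apply: ord4_ind. Qed.

Lemma set4D a0 a1 a2 a3 b0 b1 b2 b3 :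
  set4 a0 a1 a2 a3 :\: set4 b0 b1 b2 b3 =
  set4 (a0 && ~~ b0) (a1 && ~~ b1) (a2 && ~~ b2) (a3 && ~~ b3).
Proof. by apply/setP; apply: ord4_ind; rewrite !inE /= andbC. Qed.

Lemma set4T : [set: 'I_4] = set4 true true true true.
Proof. by apply/setP; apply: ord4_ind; rewrite !inE. Qed.

Lemma set40 : finset.set0 = set4 false false false false.
Proof. by apply/setP; apply: ord4_ind; rewrite !inE. Qed.

Lemma subset_set4 a0 a1 a2 a3 b0 b1 b2 b3 :
  (set4 a0 a1 a2 a3 \subset set4 b0 b1 b2 b3) =
  [&& a0 ==> b0, a1 ==> b1, a2 ==> b2 & a3 ==> b3].
Proof.
apply/fintype.subsetP/and4P => [sub | [h0 h1 h2 h3]].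
  by split; apply/implyP => a_in; [move: (sub o0) | move: (sub o1)
     | move: (sub o2) | move: (sub o3)]; rewrite !inE; apply.
by apply: ord4_ind; rewrite !inE; apply/implyP.
Qed.

Lemma eq_set40 b0 b1 b2 b3 : (set4 b0 b1 b2 b3 == finset.set0) = ~~ [|| b0, b1, b2 | b3].
Proof.
apply/eqP/idP => [/setP eq_set | ].
  by move: (eq_set o0) (eq_set o1) (eq_set o2) (eq_set o3); rewrite !inE /= => -> -> -> ->.
by move=> h; apply/setP; apply: ord4_ind; rewrite !inE; move: h;
  case: b0; case: b1; case: b2; case: b3.
Qed.

Lemma sum_ord4 (V : nmodType) (F : 'I_4 -> V) :
  \sum_(k < 4) F k = F o0 + F o1 + F o2 + F o3.
Proof.
rewrite !big_ord_recr big_ord0 /= add0r.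
by congr (_ + _ + _ + _); congr F; apply: val_inj.
Qed.

Lemma card_set4 b0 b1 b2 b3 : #|set4 b0 b1 b2 b3| = (b0 + b1 + b2 + b3)%N.
Proof.
rewrite -sum1_card big_mkcond /= sum_ord4 !in_set4 /=.
by case: b0; case: b1; case: b2; case: b3.
Qed.

Lemma ninv_set4 a0 a1 a2 a3 b0 b1 b2 b3 :
  ninv (set4 a0 a1 a2 a3) (set4 b0 b1 b2 b3) =
  ((a1 && b0) + (a2 && b0) + (a2 && b1) + (a3 && b0) + (a3 && b1) + (a3 && b2))%N.
Proof.
have sum_pair (F : 'I_4 * 'I_4 -> nat) :
    (\sum_p F p = \sum_(i < 4) \sum_(j < 4) F (i, j))%N.
  by rewrite pair_bigA; apply: eq_bigr => -[].
rewrite /ninv -sum1_card big_mkcond /= sum_pair !sum_ord4 !inE /=.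
by case: a0; case: a1; case: a2; case: a3; case: b0; case: b1; case: b2; case: b3.
Qed.

(* [Nat.add] rather than [addn], so that [/=] evaluates the parity on explicit bits. *)
Lemma sgn_set4 (R : realType) a0 a1 a2 a3 b0 b1 b2 b3 :
  sgn R (set4 a0 a1 a2 a3) (set4 b0 b1 b2 b3) =
  if odd (Nat.add (Nat.add (Nat.add (Nat.add (Nat.add
       (a1 && b0) (a2 && b0)) (a2 && b1)) (a3 && b0)) (a3 && b1)) (a3 && b2))
  then -1 else 1.
Proof. by rewrite /sgn ninv_set4 -signr_odd; case: odd. Qed.

Lemma big_set4 (V : nmodType) (F : {set 'I_4} -> V) :
  \sum_(A : {set 'I_4}) F A =
  \sum_(b0 : bool) \sum_(b1 : bool) \sum_(b2 : bool) \sum_(b3 : bool) F (set4 b0 b1 b2 b3).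
Proof.
pose bits (A : {set 'I_4}) := (o0 \in A, o1 \in A, o2 \in A, o3 \in A).
rewrite (reindex (fun p : bool * bool * bool * bool => set4 p.1.1.1 p.1.1.2 p.1.2 p.2));
  last by exists bits => [[[[c0 c1] c2] c3] _ | A _]; rewrite /bits /= ?in_set4 // -set4E.
transitivity (\sum_(p : bool * bool * bool) \sum_(b3 : bool) F (set4 p.1.1 p.1.2 p.2 b3)).
  by rewrite [RHS]pair_bigA.
transitivity (\sum_(p : bool * bool) \sum_(b2 : bool) \sum_(b3 : bool) F (set4 p.1 p.2 b2 b3)).
  by rewrite [RHS]pair_bigA.
by rewrite [RHS]pair_bigA.
Qed.

Section SecondDerivatives.
Variables (R : realType) (V : normedModType R).
Implicit Types (f g : V -> R) (x u v p : V).

Lemma is_derive_along f u p (s : R) : differentiable f (s *: u + p) ->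
  is_derive s 1 (fun r : R => f (r *: u + p)) ('D_u f (s *: u + p)).
Proof.
move=> df; have along : (fun h : R =>
    h^-1 *: (((fun r : R => f (r *: u + p)) \o shift s) (h *: 1) - f (s *: u + p)))
  = (fun h : R => h^-1 *: ((f \o shift (s *: u + p)) (h *: u) - f (s *: u + p))).
  apply: funext => h /=; congr (_ *: (f _ - _)).
  by rewrite -[h *: (1:R)]/(h * 1) mulr1 scalerDl addrA.
have := diff_derivable df; rewrite /derivable => du.
by apply: DeriveDef; rewrite /derivable /derive along.
Qed.

Lemma differentiable_remainder g x : differentiable g x -> forall e : R, 0 < e ->
  exists2 d : R, 0 < d & forall y, `|y| < d -> `|g (y + x) - g x - 'd g x y| <= e * `|y|.
Proof.
move=> dg e e0; have /eqaddoP := diff_locally dg.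
move=> /(_ e e0) /nbhs_norm0P [d /= d0 near_x]; exists d => // y /near_x /=.
by rewrite opprD addrA.
Qed.

Lemma second_difference_mvt f u v x (t : R) : (forall y, differentiable f y) -> 0 < t ->
  exists2 c : R, 0 < c < t &
    f (t *: u + t *: v + x) - f (t *: v + x) - f (t *: u + x) + f x
    = t * ('D_v f (c *: v + t *: u + x) - 'D_v f (c *: v + x)).
Proof.
move=> df t0.
pose phi s := f (s *: v + (t *: u + x)) - f (s *: v + x).
pose dphi s := 'D_v f (s *: v + (t *: u + x)) - 'D_v f (s *: v + x).
have phi' s : is_derive s (1:R) phi (dphi s).
  by have := is_deriveB (@is_derive_along f v (t *: u + x) s (df _))
    (@is_derive_along f v x s (df _)).
have [c c_in mvt] : exists2 c, c \in `]0, t[%R & phi t - phi 0 = dphi c * (t - 0).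
  apply: (@MVT R phi dphi 0 t t0) => //; apply: continuous_subspaceT => s.
  by have /derivable1_diffP/differentiable_continuous := @ex_derive _ _ _ _ _ _ _ (phi' s).
exists c; first by move: c_in; rewrite in_itv.
have -> : f (t *: u + t *: v + x) - f (t *: v + x) - f (t *: u + x) + f x = phi t - phi 0.
  by rewrite /phi scale0r !add0r addrCA addrA; ring.
by rewrite mvt subr0 mulrC /dphi addrA.
Qed.

(* By [second_difference_mvt], the error is [t] times the difference of the
   remainders of the linear approximation of ['D_v f] at [x], taken at two points
   of norm [<= t (|u| + |v|)]. *)
Lemma second_difference_approx f u v x :
  (forall y, differentiable f y) -> (forall y, differentiable ('D_v f) y) ->
  forall e : R, 0 < e -> exists2 d : R, 0 < d & forall t : R, 0 < t -> t < d ->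
   `| f (t *: u + t *: v + x) - f (t *: v + x) - f (t *: u + x) + f x
      - t ^+ 2 * 'D_u ('D_v f) x | <= e * (2 * (`|u| + `|v|)) * t ^+ 2.
Proof.
move=> df dg e e0; set g := 'D_v f.
have [d d0 approx] := differentiable_remainder (dg x) e0.
set C := `|u| + `|v|; have C0 : 0 <= C by rewrite addr_ge0.
exists (d / (C + 1)); first by rewrite divr_gt0 // ltr_wpDl.
move=> t t0 td; have [c /andP[c0 ct] ->] := second_difference_mvt u v x df t0.
set y1 := c *: v + t *: u; set y2 := c *: v.
have ny1 : `|y1| <= t * C.
  rewrite (le_trans (ler_normD _ _)) // !normrZ !ger0_norm ?(ltW c0) ?(ltW t0) //.
  by rewrite mulrDr addrC lerD2l ler_wpM2r // ltW.
have ny2 : `|y2| <= t * C.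
  rewrite normrZ ger0_norm ?(ltW c0) //.
  apply: (le_trans (y := t * `|v|)); first by rewrite ler_wpM2r // ltW.
  by apply: ler_wpM2l; [exact: ltW | rewrite /C lerDr].
have tCd : t * C < d.
  have : t * (C + 1) < d by rewrite -ltr_pdivlMr // ltr_wpDl.
  by apply: le_lt_trans; apply: ler_wpM2l; [exact: ltW | rewrite lerDl].
have gy1 := approx y1 (le_lt_trans ny1 tCd).
have gy2 := approx y2 (le_lt_trans ny2 tCd).
have -> : t * (g (y1 + x) - g (y2 + x)) - t ^+ 2 * 'D_u g x =
   t * ((g (y1 + x) - g x - 'd g x y1) - (g (y2 + x) - g x - 'd g x y2)).
  have lin : 'd g x y1 = 'd g x y2 + t * 'd g x u.
    by rewrite /y1 linearD; congr (_ + _); exact: linearZ.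
  by rewrite deriveE // lin; ring.
rewrite normrM ger0_norm ?(ltW t0) // (_ : e * _ * _ = t * (e * (2 * C) * t));
  last by ring.
apply: ler_wpM2l; first exact: ltW.
rewrite (le_trans (ler_normB _ _)) // (_ : e * _ * t = e * (t * C) + e * (t * C));
  last by ring.
by apply: lerD; [apply: (le_trans gy1) | apply: (le_trans gy2)];
  apply: ler_wpM2l => //; exact: ltW.
Qed.

(* Schwarz: both orders of differentiation give the same limit of the
   (symmetric) second difference divided by [t^2]. *)
Lemma derive_comm f u v x :
  (forall y, differentiable f y) -> (forall y, differentiable ('D_v f) y) ->
  (forall y, differentiable ('D_u f) y) ->
  'D_u ('D_v f) x = 'D_v ('D_u f) x.
Proof.
move=> df dfv dfu; set A := 'D_u _ x; set B := 'D_v _ x.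
apply/eqP; rewrite -subr_eq0 -normr_eq0 eq_le normr_ge0 andbT.
apply/ler_addgt0Pr => e e0; rewrite add0r.
set C := `|u| + `|v|; have C0 : 0 <= C by rewrite addr_ge0.
set e' := e / (4 * C + 1).
have e'0 : 0 < e' by rewrite divr_gt0 // ltr_wpDl // mulr_ge0.
have [d1 d10 approxA] := @second_difference_approx f u v x df dfv _ e'0.
have [d2 d20 approxB] := @second_difference_approx f v u x df dfu _ e'0.
have ge_min_l (a b : R) : Num.min a b <= a by rewrite ge_min lexx.
have ge_min_r (a b : R) : Num.min a b <= b by rewrite ge_min lexx orbT.
set t := Num.min d1 d2 / 2.
have t0 : 0 < t by rewrite divr_gt0 // lt_min d10 d20.
have tmin : t < Num.min d1 d2 by rewrite ltr_pdivrMr // ltr_pMr ?ltr1n // lt_min d10 d20.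
have := approxA t t0 (lt_le_trans tmin (ge_min_l d1 d2)).
have := approxB t t0 (lt_le_trans tmin (ge_min_r d1 d2)).
rewrite [t *: v + t *: u]addrC [`|v| + `|u|]addrC -/C.
set D := f _ - _ - _ + _; set D' := f _ - _ - _ + _ => hB hA.
rewrite (_ : D' = D) -/A in hA; last by rewrite /D /D'; ring.
rewrite -/B in hB.
have t20 : 0 < t ^+ 2 by rewrite exprn_gt0.
have : `|A - B| * t ^+ 2 <= e' * (4 * C) * t ^+ 2.
  rewrite -[X in _ * X](ger0_norm (ltW t20)) -normrM.
  rewrite (_ : (A - B) * _ = (D - t ^+ 2 * B) - (D - t ^+ 2 * A)); last by ring.
  rewrite (_ : e' * _ * _ = e' * (2 * C) * t ^+ 2 + e' * (2 * C) * t ^+ 2); last by ring.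
  exact: le_trans (ler_normB _ _) (lerD hB hA).
rewrite ler_pM2r // => /le_trans; apply.
have q : 0 < 4 * C + 1 by rewrite ltr_wpDl // mulr_ge0.
by rewrite /e' mulrAC ler_pdivrMr // ler_pM2l // lerDl.
Qed.

End SecondDerivatives.

Section PartialDerivatives.
Variable R : realType.
Implicit Types (f g : pt R -> R) (x : pt R) (k l : 'I_4).

(* [differentiableD] etc. for pointwise lambdas: [apply:] with the library
   statements on [f + g] has to unfold the function-space operations and is
   very slow on large goals. *)
Lemma differentiable_add f g x : differentiable f x -> differentiable g x ->
  differentiable (fun y => f y + g y) x.
Proof. exact: differentiableD. Qed.

Lemma differentiable_mul f g x : differentiable f x -> differentiable g x ->
  differentiable (fun y => f y * g y) x.
Proof. exact: differentiableM. Qed.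

Lemma differentiable_opp f x : differentiable f x -> differentiable (fun y => - f y) x.
Proof. exact: differentiableN. Qed.

Lemma partialD k f g x : differentiable f x -> differentiable g x ->
  partial k (fun y => f y + g y) x = partial k f x + partial k g x.
Proof. by move=> df dg; apply: (deriveD (diff_derivable df) (diff_derivable dg)). Qed.

Lemma partialM k f g x : differentiable f x -> differentiable g x ->
  partial k (fun y => f y * g y) x = partial k f x * g x + f x * partial k g x.
Proof.
move=> df dg; rewrite /partial (deriveM (diff_derivable df) (diff_derivable dg)).
by rewrite /GRing.scale /= addrC mulrC.
Qed.

Lemma partial_cst k (c : R) x : partial k (fun _ => c) x = 0.
Proof. exact: derive_cst. Qed.

Lemma partialZ k (c : R) f x : differentiable f x ->
  partial k (fun y => c * f y) x = c * partial k f x.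
Proof. by move=> df; rewrite partialM ?partial_cst ?mul0r ?add0r. Qed.

Lemma partialN k f x : differentiable f x ->
  partial k (fun y => - f y) x = - partial k f x.
Proof.
move=> df; rewrite (_ : (fun y => - f y) = (fun y => -1 * f y)).
  by rewrite partialZ // mulN1r.
by apply: funext => y; rewrite mulN1r.
Qed.

Lemma differentiable_big (I : Type) (r : seq I) (P : pred I) (F : I -> pt R -> R) x :
  (forall i, differentiable (F i) x) ->
  differentiable (fun y => \sum_(i <- r | P i) F i y) x.
Proof.
move=> dF; elim: r => [|i r IH]; first by under eq_fun do rewrite big_nil.
by under eq_fun do rewrite big_cons; case: (P i) => //; apply: differentiable_add.
Qed.

Lemma partial_sum (I : Type) (r : seq I) (P : pred I) (F : I -> pt R -> R) k x :
  (forall i, differentiable (F i) x) ->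
  partial k (fun y => \sum_(i <- r | P i) F i y) x = \sum_(i <- r | P i) partial k (F i) x.
Proof.
move=> dF; elim: r => [|i r IH].
  by rewrite big_nil; under eq_fun do rewrite big_nil; apply: partial_cst.
rewrite big_cons; under eq_fun do rewrite big_cons.
by case: (P i) => //; rewrite partialD ?IH //; apply: differentiable_big.
Qed.

Lemma smooth_differentiable f x : smooth f -> differentiable f x.
Proof. by move/(_ [::] x). Qed.

Lemma smooth_partial k f : smooth f -> smooth (partial k f).
Proof. by move=> sf s x; have := sf (s ++ [:: k]) x; rewrite /iter_partial foldr_cat. Qed.

Lemma smooth_cst (c : R) : smooth (fun _ => c).
Proof.
move=> s x; suff -> : iter_partial s (fun _ : pt R => c) = fun _ => if s is [::] then c else 0.
  exact: differentiable_cst.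
by elim: s => [//|k s IH] /=; rewrite IH; apply: funext => y; apply: partial_cst.
Qed.

Lemma partial_comm k l f x : smooth f ->
  partial k (partial l f) x = partial l (partial k f) x.
Proof.
move=> sf; apply: derive_comm => y; last 2 first.
- exact: smooth_differentiable (smooth_partial l sf).
- exact: smooth_differentiable (smooth_partial k sf).
exact: smooth_differentiable.
Qed.

End PartialDerivatives.

Notation s01 := (set4 true true false false).
Notation s02 := (set4 true false true false).
Notation s03 := (set4 true false false true).
Notation s12 := (set4 false true true false).
Notation s13 := (set4 false true false true).
Notation s23 := (set4 false false true true).

Section Coordinates.
Variable R : realType.
Implicit Types (w : diffform R) (f : pt R -> R) (eta : 'I_4 -> pt R -> R).

Lemma dform_set4 w b0 b1 b2 b3 : let S := set4 b0 b1 b2 b3 in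
  dform w S = fun y =>
    (if b0 then sgn R [set o0] (S :\ o0) * partial o0 (w (S :\ o0)) y else 0)
  + (if b1 then sgn R [set o1] (S :\ o1) * partial o1 (w (S :\ o1)) y else 0)
  + (if b2 then sgn R [set o2] (S :\ o2) * partial o2 (w (S :\ o2)) y else 0)
  + (if b3 then sgn R [set o3] (S :\ o3) * partial o3 (w (S :\ o3)) y else 0).
Proof. by apply: funext => y; rewrite /dform big_mkcond sum_ord4 !in_set4. Qed.

Lemma iprod_set4 eta w b0 b1 b2 b3 : let S := set4 b0 b1 b2 b3 in
  iprod eta w S = fun y =>
    (if ~~ b0 then eta o0 y * sgn R [set o0] S * w (o0 |: S) y else 0)
  + (if ~~ b1 then eta o1 y * sgn R [set o1] S * w (o1 |: S) y else 0)
  + (if ~~ b2 then eta o2 y * sgn R [set o2] S * w (o2 |: S) y else 0)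
  + (if ~~ b3 then eta o3 y * sgn R [set o3] S * w (o3 |: S) y else 0).
Proof. by apply: funext => y; rewrite /iprod big_mkcond sum_ord4 !in_set4. Qed.

Lemma fn0_set4 f b0 b1 b2 b3 :
  fn0 f (set4 b0 b1 b2 b3) = if [|| b0, b1, b2 | b3] then fun _ => 0 else f.
Proof. by apply: funext => y; rewrite /fn0 eq_set40; case: [|| b0, b1, b2 | b3]. Qed.

End Coordinates.

Ltac set4_simpl := rewrite ?set4D1 ?set4U1 ?set4_set1 ?set4D /= ?sgn_set4 /=.

Ltac differentiable_tac := solve [repeat first
  [ apply: differentiable_add | apply: differentiable_mul | apply: differentiable_opp
  | apply: differentiable_cst | by auto
  | apply: smooth_differentiable; repeat apply: smooth_partial; by auto ]].

Ltac partial_simpl := repeat first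
  [ rewrite partial_cst
  | rewrite partialZ; [ | differentiable_tac ]
  | rewrite partialD; [ | differentiable_tac | differentiable_tac ]
  | rewrite partialM; [ | differentiable_tac | differentiable_tac ]
  | rewrite partialN; [ | differentiable_tac ] ].

(* Locking [partial] keeps [ring] from unfolding it when comparing atoms, which
   is prohibitively slow. *)
Ltac ring_partial := try rewrite [@partial _]lock; ring.

Ltac sort_partials x := repeat match goal with
  | |- context [partial ?k (partial ?l ?f) x] =>
    lazymatch eval compute in (val l < val k)%N with
    | true => rewrite (@partial_comm _ k l f x); last by auto
    end
  end.

(* Every coefficient of [d (d w)] is a signed sum of mixed second partials that
   cancel in pairs once each is put in a normal order by [partial_comm]. *)
Lemma dform_dform (R : realType) (w : diffform R) S x : (forall S, smooth (w S)) ->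
  dform (dform w) S x = 0.
Proof.
move=> sw; rewrite (set4E S).
case: (o0 \in S); case: (o1 \in S); case: (o2 \in S); case: (o3 \in S);
rewrite dform_set4 /=; set4_simpl; rewrite ?dform_set4 /=; set4_simpl; partial_simpl;
sort_partials x; ring_partial.
Qed.

Section FormAlgebra.
Variable R : realType.
Implicit Types (w u v : diffform R) (f : pt R -> R) (x : pt R) (eta : 'I_4 -> pt R -> R).

Lemma dformD u v S x : (forall T, differentiable (u T) x) -> (forall T, differentiable (v T) x) ->
  dform (fun T y => u T y + v T y) S x = dform u S x + dform v S x.
Proof.
by move=> du dv; rewrite /dform -big_split; apply: eq_bigr => k _; rewrite partialD // mulrDr.
Qed.

Lemma dformZ (c : R) u S x : (forall T, differentiable (u T) x) ->
  dform (fun T y => c * u T y) S x = c * dform u S x.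
Proof.
by move=> du; rewrite /dform mulr_sumr; apply: eq_bigr => k _; rewrite partialZ // mulrCA.
Qed.

Lemma constant_form_differentiable w S x : constant_form w -> differentiable (w S) x.
Proof.
move=> cw; rewrite (_ : w S = fun _ => w S x); first exact: differentiable_cst.
by apply: funext => y; apply: cw.
Qed.

Lemma dform_constant w S x : constant_form w -> dform w S x = 0.
Proof.
move=> cw; rewrite /dform big1 // => k _.
rewrite (_ : w (S :\ k) = fun _ => w (S :\ k) x) ?partial_cst ?mulr0 //.
by apply: funext => y; apply: cw.
Qed.

Lemma smooth_fn0 f T : smooth f -> smooth (fn0 f T).
Proof. by rewrite /fn0 => sf; case: (T == finset.set0) => //; apply: smooth_cst. Qed.

Lemma differentiable_dform w T x : (forall S, smooth (w S)) ->
  differentiable (dform w T) x.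
Proof.
move=> sw; rewrite /dform; apply: differentiable_big => k.
apply: differentiable_mul; first exact: differentiable_cst.
exact/smooth_differentiable/smooth_partial.
Qed.

Lemma differentiable_iprod eta w T x : (forall k, differentiable (eta k) x) ->
  (forall S, differentiable (w S) x) -> differentiable (iprod eta w T) x.
Proof.
move=> deta dw; rewrite /iprod; apply: differentiable_big => k.
by apply: differentiable_mul => //; apply: differentiable_mul => //; apply: differentiable_cst.
Qed.

Lemma differentiable_wedge u v S x : (forall T, differentiable (u T) x) ->
  (forall T, differentiable (v T) x) -> differentiable (wedge u v S) x.
Proof.
move=> du dv; rewrite /wedge; apply: differentiable_big => A.
by apply: differentiable_mul => //; apply: differentiable_mul => //; apply: differentiable_cst.
Qed.

Lemma is_deg_dform p w : is_deg p w -> is_deg p.+1 (dform w).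
Proof.
move=> degw S S_ne; apply: funext => y; rewrite /dform big1 // => k kS.
rewrite (degw (S :\ k)) ?partial_cst ?mulr0 //.
by apply: contra S_ne; rewrite (cardsD1 k S) kS => /eqP ->.
Qed.

Lemma is_deg_iprod p eta w : is_deg p.+1 w -> is_deg p (iprod eta w).
Proof.
move=> degw S S_ne; apply: funext => y; rewrite /iprod big1 // => k kS.
by rewrite (degw (k |: S)) ?mulr0 // cardsU1 kS.
Qed.

Lemma is_deg_wedge p q u v : is_deg p u -> is_deg q v -> is_deg (p + q) (wedge u v).
Proof.
move=> degu degv S S_ne; apply: funext => y; rewrite /wedge big1 // => A AS.
have [cardA | /degu->] := eqVneq #|A| p; last by rewrite mulr0 mul0r.
rewrite (degv (S :\: A)) ?mulr0 // cardsD (finset.setIidPr AS) cardA.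
apply: contra S_ne => /eqP <-; rewrite subnKC // -cardA; exact: subset_leq_card.
Qed.

Lemma cards4T (S : {set 'I_4}) : #|S| = 4%N -> S = [set: 'I_4].
Proof. by move=> cardS; apply/eqP; rewrite eqEcard finset.subsetT cardsT card_ord cardS. Qed.

End FormAlgebra.

Section TopDegree.
Variable R : realType.
Implicit Types (A B C Z : diffform R) (f g : pt R -> R) (x : pt R) (eta : 'I_4 -> pt R -> R).

Definition wedge22 A B x : R :=
  A s01 x * B s23 x - A s02 x * B s13 x + A s03 x * B s12 x
  + A s12 x * B s03 x - A s13 x * B s02 x + A s23 x * B s01 x.
Arguments wedge22 : simpl never.

Definition lie_fun eta f x : R := \sum_(k < 4) eta k x * partial k f x.

(* The Lie derivative of the top form [f dx^0 /\ dx^1 /\ dx^2 /\ dx^3] along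
   [eta] is [(div (f eta)) dx^0 /\ dx^1 /\ dx^2 /\ dx^3]. *)
Definition lie_top eta f x : R := \sum_(k < 4) partial k (fun y => eta k y * f y) x.

Ltac zero_off_degree h := repeat match goal with
  | |- context [?A (set4 ?b0 ?b1 ?b2 ?b3)] =>
    rewrite (h (set4 b0 b1 b2 b3)); last by rewrite card_set4
  end.

Lemma wedge22_top A B x : is_deg 2 A -> is_deg 2 B ->
  wedge A B [set: 'I_4] x = wedge22 A B x.
Proof.
move=> degA degB; rewrite /wedge set4T big_mkcond big_set4 !big_bool /=.
rewrite !subset_set4 /= !set4D /= !sgn_set4 /=.
zero_off_degree degA; zero_off_degree degB; rewrite /wedge22 /=; ring.
Qed.

Lemma wedge22C A B x : wedge22 A B x = wedge22 B A x.
Proof. by rewrite /wedge22; ring. Qed.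

Lemma wedge22_linl (c : R) A B C x :
  wedge22 (fun S y => c * A S y + B S y) C x = c * wedge22 A C x + wedge22 B C x.
Proof. by rewrite /wedge22; ring. Qed.

Lemma wedge22_linr (c : R) A B C x :
  wedge22 C (fun S y => c * A S y + B S y) x = c * wedge22 C A x + wedge22 C B x.
Proof. by rewrite wedge22C wedge22_linl !(wedge22C C). Qed.

Lemma differentiable_wedge22 A B x : (forall S, differentiable (A S) x) ->
  (forall S, differentiable (B S) x) -> differentiable (wedge22 A B) x.
Proof. by move=> dA dB; rewrite /wedge22; differentiable_tac. Qed.

Lemma iprod_dform_fn0 eta f x :
  iprod eta (dform (fn0 f)) finset.set0 x = lie_fun eta f x.
Proof.
rewrite set40 iprod_set4 /=; set4_simpl; rewrite !dform_set4 /=; set4_simpl.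
by rewrite !fn0_set4 /= /lie_fun sum_ord4; ring_partial.
Qed.

Lemma dform_iprod_top eta Z x :
  (forall k, differentiable (eta k) x) -> differentiable (Z [set: 'I_4]) x ->
  dform (iprod eta Z) [set: 'I_4] x = lie_top eta (Z [set: 'I_4]) x.
Proof.
rewrite set4T => deta dZ; rewrite dform_set4 /=; set4_simpl.
rewrite !iprod_set4 /=; set4_simpl; partial_simpl.
by rewrite /lie_top sum_ord4; partial_simpl; ring_partial.
Qed.

Lemma lie_topM eta f g x : (forall k, differentiable (eta k) x) ->
  differentiable f x -> differentiable g x ->
  lie_top eta (fun y => f y * g y) x = lie_fun eta f x * g x + f x * lie_top eta g x.
Proof.
move=> deta df dg; rewrite /lie_top /lie_fun mulr_suml mulr_sumr -big_split.
apply: eq_bigr => k _ /=; rewrite (_ : (fun y => eta k y * (f y * g y))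
  = fun y => f y * (eta k y * g y)); last by apply: funext => y; ring.
by partial_simpl; ring_partial.
Qed.

Lemma lie_topZ eta (c : R) f x : (forall k, differentiable (eta k) x) ->
  differentiable f x -> lie_top eta (fun y => c * f y) x = c * lie_top eta f x.
Proof.
move=> deta df; rewrite /lie_top mulr_sumr; apply: eq_bigr => k _.
rewrite (_ : (fun y => eta k y * (c * f y)) = fun y => c * (eta k y * f y)).
  by rewrite partialZ //; apply: differentiable_mul.
by apply: funext => y; ring.
Qed.

Lemma lie_fun_sum (I : Type) (r : seq I) (P : pred I) eta (F : I -> pt R -> R) x :
  (forall i, differentiable (F i) x) ->
  lie_fun eta (fun y => \sum_(i <- r | P i) F i y) x = \sum_(i <- r | P i) lie_fun eta (F i) x.
Proof.
move=> dF; rewrite /lie_fun exchange_big; apply: eq_bigr => k _.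
by rewrite partial_sum // mulr_sumr.
Qed.

Lemma lie_top_sum (I : Type) (r : seq I) (P : pred I) eta (F : I -> pt R -> R) x :
  (forall k, differentiable (eta k) x) -> (forall i, differentiable (F i) x) ->
  lie_top eta (fun y => \sum_(i <- r | P i) F i y) x = \sum_(i <- r | P i) lie_top eta (F i) x.
Proof.
move=> deta dF; rewrite /lie_top exchange_big; apply: eq_bigr => k _.
under eq_fun do rewrite mulr_sumr.
by rewrite partial_sum // => i; apply: differentiable_mul.
Qed.

Lemma closed_partial_rels A x : (forall S y, dform A S y = 0) ->
  [/\ partial o0 (A s12) x = partial o1 (A s02) x - partial o2 (A s01) x,
      partial o0 (A s13) x = partial o1 (A s03) x - partial o3 (A s01) x,
      partial o0 (A s23) x = partial o2 (A s03) x - partial o3 (A s02) x &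
      partial o1 (A s23) x = partial o2 (A s13) x - partial o3 (A s12) x].
Proof.
move=> closedA.
move: (closedA (set4 true true true false) x) (closedA (set4 true true false true) x)
  (closedA (set4 true false true true) x) (closedA (set4 false true true true) x).
rewrite !dform_set4 /=; set4_simpl => h1 h2 h3 h4.
by split; apply: subr0_eq; [rewrite -[RHS]h1 | rewrite -[RHS]h2 | rewrite -[RHS]h3
  | rewrite -[RHS]h4]; ring_partial.
Qed.

(* [L_eta (A /\ B) = L_eta A /\ B + A /\ L_eta B], where [L_eta A = d i_eta A]
   for closed [A] by Cartan's formula. *)
Lemma lie_top_wedge22 eta A B x :
  (forall k y, differentiable (eta k) y) ->
  (forall S y, differentiable (A S) y) -> (forall S y, differentiable (B S) y) ->
  (forall S y, dform A S y = 0) -> (forall S y, dform B S y = 0) ->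
  lie_top eta (wedge22 A B) x
  = wedge22 (dform (iprod eta A)) B x + wedge22 A (dform (iprod eta B)) x.
Proof.
move=> deta dA dB closedA closedB.
have [a1 a2 a3 a4] := closed_partial_rels x closedA.
have [b1 b2 b3 b4] := closed_partial_rels x closedB.
rewrite /lie_top sum_ord4 /wedge22 /= !dform_set4 /=; set4_simpl.
rewrite !iprod_set4 /=; set4_simpl; partial_simpl.
by rewrite a1 a2 a3 a4 b1 b2 b3 b4; ring_partial.
Qed.

End TopDegree.

Lemma sum_sym_skew (I : finType) (R : pzRingType) (p f g : I -> I -> R) :
  (forall i j, p i j = p j i) ->
  \sum_i \sum_j (g i j + (p i j * f j i - p i j * f i j)) = \sum_i \sum_j g i j.
Proof.
move=> psym; under eq_bigr => i _ do rewrite big_split /= sumrB.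
rewrite big_split /= sumrB.
suff -> : \sum_i \sum_j p i j * f j i = \sum_i \sum_j p i j * f i j by rewrite subrr addr0.
by rewrite exchange_big; apply: eq_bigr => i _; apply: eq_bigr => j _; rewrite psym.
Qed.

Lemma sum_traceless (I : finType) (R : pzSemiRingType) (p : I -> I -> R) (c : R) :
  \sum_i p i i = 0 -> \sum_i \sum_j p i j * (if i == j then c else 0) = 0.
Proof.
move=> tr0; transitivity (\sum_i p i i * c); last by rewrite -mulr_suml tr0 mul0r.
apply: eq_bigr => i _.
rewrite (bigD1 i) //= eqxx big1 ?addr0 // => j.
by rewrite eq_sym => /negbTE ->; rewrite mulr0.
Qed.

Section Lagrangian.
Variables (R : realType) (M : R) (H : 'I_3 -> diffform R) (vol : diffform R).
Variables (a : 'I_3 -> diffform R) (Psi : 'I_3 -> 'I_3 -> pt R -> R).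
Variable eta : 'I_4 -> pt R -> R.
Hypotheses (H_deg : forall i, is_deg 2 (H i)) (H_const : forall i, constant_form (H i)).
Hypothesis HH : forall i j, wedge (H i) (H j) = fun S x => (if i == j then 2 else 0) * vol S x.
Hypotheses (a_deg : forall i, is_deg 1 (a i)) (a_smooth : forall i, smooth_form (a i)).
Hypotheses (Psi_smooth : forall i j, smooth (Psi i j)) (Psi_sym : forall i j, Psi i j = Psi j i).
Hypothesis Psi_traceless : forall x, \sum_(i < 3) Psi i i x = 0.
Hypothesis eta_differentiable : forall k x, differentiable (eta k) x.

Definition curv i : diffform R := fun S x => M ^+ 2 * H i S x + dform (a i) S x.

Definition lie_curv i : diffform R := dform (iprod eta (curv i)).

(* [L_eta L] for [L = 1/2 Psi_ij F^i /\ F^j], expanded by the Leibniz rule. *)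
Definition lie_Lag x : R :=
  \sum_i \sum_j lie_fun eta (Psi i j) x * (2^-1 * wedge22 (curv i) (curv j) x)
  + \sum_i \sum_j Psi i j x *
      (2^-1 * (wedge22 (lie_curv i) (curv j) x + wedge22 (curv i) (lie_curv j) x)).

Lemma is_deg_da i : is_deg 2 (dform (a i)).
Proof. exact: is_deg_dform. Qed.

Lemma is_deg_curv i : is_deg 2 (curv i).
Proof.
by move=> S S_ne; apply: funext => y; rewrite /curv H_deg // is_deg_da // mulr0 addr0.
Qed.

Lemma is_deg_lie_curv i : is_deg 2 (lie_curv i).
Proof. exact: is_deg_dform (is_deg_iprod eta (is_deg_curv i)). Qed.

Lemma differentiable_H i S x : differentiable (H i S) x.
Proof. exact: constant_form_differentiable (H_const i). Qed.

Lemma differentiable_curv i S x : differentiable (curv i S) x.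
Proof.
apply: differentiable_add; last exact: differentiable_dform (a_smooth i).
by apply: differentiable_mul; [apply: differentiable_cst | apply: differentiable_H].
Qed.

Lemma dform_curv i S x : dform (curv i) S x = 0.
Proof.
rewrite dformD => [|T|T]; last exact: differentiable_dform (a_smooth i).
  rewrite dformZ => [|T]; last exact: differentiable_H.
  by rewrite (dform_constant S x (H_const i)) (dform_dform S x (a_smooth i)) mulr0 addr0.
by apply: differentiable_mul; [apply: differentiable_cst | apply: differentiable_H].
Qed.

Lemma wedge22_HH i j x :
  wedge22 (H i) (H j) x = (if i == j then 2 else 0) * vol [set: 'I_4] x.
Proof. by rewrite -wedge22_top // HH. Qed.

(* The [M^4 H^i /\ H^j] part of [Psi_ij F^i /\ F^j] is killed by tracelessness,
   and the two cross terms agree by symmetry of [Psi]. *)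
Lemma Lag_density (p : 'I_3 -> 'I_3 -> R) x :
  (forall i j, p i j = p j i) -> \sum_i p i i = 0 ->
  \sum_i \sum_j p i j * (M ^+ 2 * wedge22 (H i) (dform (a j)) x
                         + 2^-1 * wedge22 (dform (a i)) (dform (a j)) x)
  = \sum_i \sum_j p i j * (2^-1 * wedge22 (curv i) (curv j) x).
Proof.
move=> psym ptr.
pose cross i j := 2^-1 * M ^+ 2 * wedge22 (H i) (dform (a j)) x.
have expand i j : p i j * (2^-1 * wedge22 (curv i) (curv j) x) =
    p i j * (M ^+ 2 * wedge22 (H i) (dform (a j)) x
             + 2^-1 * wedge22 (dform (a i)) (dform (a j)) x)
    + (p i j * (if i == j then M ^+ 4 * vol [set: 'I_4] x else 0))
    + (p i j * cross j i - p i j * cross i j).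
  rewrite /curv /cross wedge22_linl !wedge22_linr wedge22_HH.
  by rewrite (wedge22C (dform (a i))); case: eqP => _; field.
symmetry; under eq_bigr => i _ do under eq_bigr => j _ do rewrite expand.
rewrite sum_sym_skew //.
under eq_bigr => i _ do rewrite big_split /=.
by rewrite big_split /= sum_traceless // addr0.
Qed.

Lemma variation_density (p : 'I_3 -> 'I_3 -> R) (G : 'I_3 -> diffform R) x :
  (forall i j, p i j = p j i) ->
  \sum_i \sum_j p i j * (M ^+ 2 * wedge22 (H i) (G j) x
      + 2^-1 * (wedge22 (G i) (dform (a j)) x + wedge22 (dform (a i)) (G j) x))
  = \sum_i \sum_j p i j * (2^-1 * (wedge22 (G i) (curv j) x + wedge22 (curv i) (G j) x)).
Proof.
move=> psym.
pose cross i j := 2^-1 * M ^+ 2 * wedge22 (H i) (G j) x.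
have expand i j :
    p i j * (2^-1 * (wedge22 (G i) (curv j) x + wedge22 (curv i) (G j) x)) =
    p i j * (M ^+ 2 * wedge22 (H i) (G j) x
      + 2^-1 * (wedge22 (G i) (dform (a j)) x + wedge22 (dform (a i)) (G j) x))
    + (p i j * cross j i - p i j * cross i j).
  by rewrite /curv /cross wedge22_linl wedge22_linr (wedge22C (G i)); field.
symmetry; under eq_bigr => i _ do under eq_bigr => j _ do rewrite expand.
exact: sum_sym_skew.
Qed.

Lemma Lag_top x :
  Lag M H Psi a [set: 'I_4] x = \sum_i \sum_j Psi i j x * (2^-1 * wedge22 (curv i) (curv j) x).
Proof.
rewrite /Lag; under eq_bigr => i _ do under eq_bigr => j _ do
  rewrite (wedge22_top x (H_deg i) (is_deg_da j)) (wedge22_top x (is_deg_da i) (is_deg_da j)).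
by apply: Lag_density => [i j|]; [rewrite Psi_sym | apply: Psi_traceless].
Qed.

Lemma is_deg_Lag : is_deg 4 (Lag M H Psi a).
Proof.
move=> S S_ne; apply: funext => y; rewrite /Lag big1 // => i _; rewrite big1 // => j _.
rewrite (is_deg_wedge (H_deg i) (is_deg_da j) S_ne).
by rewrite (is_deg_wedge (is_deg_da i) (is_deg_da j) S_ne) !mulr0 addr0 mulr0.
Qed.

Lemma differentiable_Lag S x : differentiable (Lag M H Psi a S) x.
Proof.
have dH i T : differentiable (H i T) x := differentiable_H i T x.
have dda i T : differentiable (dform (a i) T) x := differentiable_dform T x (a_smooth i).
rewrite /Lag; apply: differentiable_big => i; apply: differentiable_big => j.
apply: differentiable_mul; first exact: smooth_differentiable.
by apply: differentiable_add; apply: differentiable_mul;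
  [ apply: differentiable_cst | apply: differentiable_wedge
  | apply: differentiable_cst | apply: differentiable_wedge ].
Qed.

Lemma dform_iprod_Lag x : dform (iprod eta (Lag M H Psi a)) [set: 'I_4] x = lie_Lag x.
Proof.
have dPsi i j : differentiable (Psi i j) x := smooth_differentiable x (Psi_smooth i j).
have dW i j y : differentiable (wedge22 (curv i) (curv j)) y.
  by apply: differentiable_wedge22 => S; apply: differentiable_curv.
have dterm i j : differentiable (fun y => Psi i j y * (2^-1 * wedge22 (curv i) (curv j) y)) x.
  by apply: differentiable_mul => //; apply: differentiable_mul; [apply: differentiable_cst|].
have dsum i : differentiable (fun y => \sum_j Psi i j y * (2^-1 * wedge22 (curv i) (curv j) y)) x.
  exact: differentiable_big.
have LagE : Lag M H Psi a [set: 'I_4] =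
    fun y => \sum_i \sum_j Psi i j y * (2^-1 * wedge22 (curv i) (curv j) y).
  by apply: funext => y; apply: Lag_top.
rewrite dform_iprod_top //; last exact: differentiable_Lag.
rewrite LagE lie_top_sum // /lie_Lag -big_split; apply: eq_bigr => i _.
rewrite lie_top_sum // -big_split; apply: eq_bigr => j _.
rewrite lie_topM //; last by apply: differentiable_mul; [apply: differentiable_cst|].
rewrite (@lie_topZ _ eta _ (wedge22 (curv i) (curv j))) // lie_top_wedge22 //
  => [S y | S y | S y | S y]; by [apply: differentiable_curv | apply: dform_curv].
Qed.

Lemma dform_variation_a (xi : 'I_3 -> pt R -> R) i : smooth (xi i) ->
  dform (fun S y => dform (fn0 (xi i)) S y + iprod eta (curv i) S y) = lie_curv i.
Proof.
move=> xi_smooth; apply: funext => S; apply: funext => y.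
rewrite dformD ?dform_dform ?add0r // => [T|T|T].
- exact: smooth_fn0.
- by apply: differentiable_dform => U; apply: smooth_fn0.
- by apply: differentiable_iprod => // U; apply: differentiable_curv.
Qed.

Lemma Lag_variation_top (xi : 'I_3 -> pt R -> R) x : (forall i, smooth (xi i)) ->
  Lag_variation M H Psi a (fun i j y => iprod eta (dform (fn0 (Psi i j))) finset.set0 y)
    (fun i S y => dform (fn0 (xi i)) S y + iprod eta (curv i) S y) [set: 'I_4] x
  = lie_Lag x.
Proof.
move=> xi_smooth; rewrite /Lag_variation /lie_Lag.
under eq_bigr => i _ do rewrite big_split /=.
rewrite big_split /=; congr (_ + _).
  under eq_bigr => i _ do under eq_bigr => j _ do rewrite iprod_dform_fn0
    (wedge22_top x (H_deg i) (is_deg_da j)) (wedge22_top x (is_deg_da i) (is_deg_da j)).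
  apply: Lag_density => [i j|]; first by rewrite Psi_sym.
  rewrite -lie_fun_sum => [|i]; last exact: smooth_differentiable.
  rewrite (_ : (fun y => _) = fun _ => 0); last by apply: funext => y; apply: Psi_traceless.
  by rewrite /lie_fun big1 // => k _; rewrite partial_cst mulr0.
under eq_bigr => i _ do under eq_bigr => j _ do rewrite !dform_variation_a //
  (wedge22_top x (H_deg i) (is_deg_lie_curv j))
  (wedge22_top x (is_deg_lie_curv i) (is_deg_da j))
  (wedge22_top x (is_deg_da i) (is_deg_lie_curv j)).
by apply: variation_density => i j; rewrite Psi_sym.
Qed.

Lemma Lag_variation_off_top (xi : 'I_3 -> pt R -> R) (S : {set 'I_4}) (x : pt R) :
  (forall i, smooth (xi i)) -> #|S| != 4%N ->
  Lag_variation M H Psi a (fun i j y => iprod eta (dform (fn0 (Psi i j))) finset.set0 y)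
    (fun i S y => dform (fn0 (xi i)) S y + iprod eta (curv i) S y) S x = 0.
Proof.
move=> xi_smooth S_ne; rewrite /Lag_variation big1 // => i _; rewrite big1 // => j _.
rewrite !dform_variation_a //.
rewrite (is_deg_wedge (H_deg i) (is_deg_da j) S_ne) (is_deg_wedge (is_deg_da i) (is_deg_da j) S_ne).
rewrite (is_deg_wedge (H_deg i) (is_deg_lie_curv j) S_ne).
rewrite (is_deg_wedge (is_deg_lie_curv i) (is_deg_da j) S_ne).
by rewrite (is_deg_wedge (is_deg_da i) (is_deg_lie_curv j) S_ne) /=; ring.
Qed.

End Lagrangian.

Theorem mainTheorem2 (R : realType) (H : 'I_3 -> diffform R) (vol : diffform R)
  (M : R) (a : 'I_3 -> diffform R) (Psi : 'I_3 -> 'I_3 -> 'rV[R]_4 -> R)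
  (eta : 'I_4 -> 'rV[R]_4 -> R) (xi : 'I_3 -> 'rV[R]_4 -> R) :
  (forall i, is_deg 2 (H i) /\ constant_form (H i)) ->
  is_deg 4 vol -> constant_form vol -> (forall x, vol (finset.setTfor 'I_4) x != 0) ->
  (forall i j, wedge (H i) (H j) =
               (fun S x => (if i == j then 2 else 0) * vol S x)) ->
  0 < M ->
  (forall i, is_deg 1 (a i) /\ smooth_form (a i)) ->
  (forall i j, smooth (Psi i j)) ->
  (forall i j, Psi i j = Psi j i) ->
  (forall x, \sum_(i < 3) Psi i i x = 0) ->
  (forall k, smooth (eta k)) ->
  (forall i, smooth (xi i)) ->
  let F := fun i : 'I_3 => (fun S x => M ^+ 2 * H i S x + dform (a i) S x) in
  let delta_a := fun i : 'I_3 =>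
    (fun S x => dform (fn0 (xi i)) S x + iprod eta (F i) S x) in
  let delta_Psi := fun i j : 'I_3 =>
    (fun x => iprod eta (dform (fn0 (Psi i j))) finset.set0 x) in
  Lag_variation M H Psi a delta_Psi delta_a
  = dform (iprod eta (Lag M H Psi a)).
Proof.
move=> HP _ _ _ HH _ aP Psi_smooth Psi_sym Psi_traceless eta_smooth xi_smooth F delta_a delta_Psi.
have H_deg i := (HP i).1; have H_const i := (HP i).2.
have a_deg i := (aP i).1; have a_smooth i := (aP i).2.
have eta_diff k y : differentiable (eta k) y := smooth_differentiable y (eta_smooth k).
apply: funext => S; apply: funext => x.
have [/cards4T-> | S_ne4] := eqVneq #|S| 4%N.
  by rewrite (Lag_variation_top M (vol := vol)) // (dform_iprod_Lag M (vol := vol)).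
rewrite (Lag_variation_off_top M Psi) //.
by rewrite (is_deg_dform (is_deg_iprod eta (is_deg_Lag M Psi H_deg a_deg)) S_ne4).
Qed.
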